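(* Let $A$ be an associative algebra, $M$ an $A$-bimodule and $H:A\otimes A\to M$ a Hochschild $2$-cocycle. A collection $\{ T_\alpha : M \to A \}_{\alpha \in \Omega}$ of linear maps is an $H$-twisted $\mathcal{O}$-operator family if and only if the collection of graphs $\{ \mathrm{Gr}(T_\alpha) \}_{\alpha \in \Omega}$, $\mathrm{Gr}(T_\alpha)=\{(T_\alpha(u),u): u\in M\}\subset A\oplus M$, is a subalgebra family of the $H$-twisted semidirect product algebra $A \ltimes_H M$.
   Context: $\Omega$ is a semigroup. Hochschild $2$-cocycle: bilinear $H$ with $a \cdot H (b, c) - H ( a \cdot b, c)+ H (a, b \cdot c) - H (a, b) \cdot c =0$. $H$-twisted $\mathcal{O}$-operator family: linear maps $T_\alpha:M\to A$ with $T_\alpha (u) \cdot T_\beta (v) = T_{\alpha \beta} \big( T_\alpha (u) \cdot v + u \cdot T_\beta (v) + H (T_\alpha (u), T_\beta (v)) \big)$ for all $u,v,\alpha,\beta$. $A\ltimes_H M$ is $A\oplus M$ with the associative product $(a,u) \star_H (b, v) = (a \cdot b , a \cdot v + u \cdot b + H (a, b))$. A collection $\{B_\alpha\}_{\alpha\in\Omega}$ of subspaces of an algebra is a subalgebra family if $B_\alpha\cdot B_\beta\subset B_{\alpha\beta}$ for all $\alpha,\beta$. *)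

From HB Require Import structures.
From mathcomp Require Import all_boot all_order all_algebra.
Set Implicit Arguments. Unset Strict Implicit. Unset Printing Implicit Defensive.
Import GRing.Theory.
Local Open Scope ring_scope.

Section Defs.
Variable R : comRingType.

Definition is_linear (U V : lmodType R) (f : U -> V) :=
  forall (k : R) (x y : U), f (k *: x + y) = k *: f x + f y.

Definition is_bilinear (U V W : lmodType R) (f : U -> V -> W) :=
  (forall y, is_linear (fun x => f x y)) /\ (forall x, is_linear (f x)).

Definition is_assoc_algebra (A : lmodType R) (mul : A -> A -> A) :=
  is_bilinear mul /\ associative mul.

Definition is_bimodule (A M : lmodType R) (mul : A -> A -> A)
    (lact : A -> M -> M) (ract : M -> A -> M) :=
  [/\ is_bilinear lact, is_bilinear ract,
      (forall a b u, lact (mul a b) u = lact a (lact b u)),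
      (forall a u b, ract (lact a u) b = lact a (ract u b)) &
      (forall u a b, ract (ract u a) b = ract u (mul a b))].

Definition is_hochschild_2cocycle (A M : lmodType R) (mul : A -> A -> A)
    (lact : A -> M -> M) (ract : M -> A -> M) (H : A -> A -> M) :=
  is_bilinear H /\
  forall a b c, lact a (H b c) - H (mul a b) c + H a (mul b c) - ract (H a b) c = 0.

Definition is_twisted_O_operator_family (Om : Type) (op : Om -> Om -> Om)
    (A M : lmodType R) (mul : A -> A -> A)
    (lact : A -> M -> M) (ract : M -> A -> M) (H : A -> A -> M)
    (T : Om -> M -> A) :=
  (forall al, is_linear (T al)) /\
  forall al be (u v : M),
    mul (T al u) (T be v) =
    T (op al be) (lact (T al u) v + ract u (T be v) + H (T al u) (T be v)).
End Defs.

Definition twisted_semidirect_mul (R : comRingType) (A M : lmodType R)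
    (mul : A -> A -> A) (lact : A -> M -> M) (ract : M -> A -> M)
    (H : A -> A -> M) (x y : A * M) : A * M :=
  (mul x.1 y.1, lact x.1 y.2 + ract x.2 y.1 + H x.1 y.1).

Definition graph (A M : Type) (T : M -> A) : A * M -> Prop :=
  fun p => exists u : M, p = (T u, u).

Definition is_subspace_prod (R : comRingType) (A M : lmodType R)
    (B : A * M -> Prop) :=
  B (0, 0) /\
  forall (k : R) x y, B x -> B y -> B (k *: x.1 + y.1, k *: x.2 + y.2).

Definition is_subalgebra_family (R : comRingType) (A M : lmodType R)
    (Om : Type) (op : Om -> Om -> Om) (star : A * M -> A * M -> A * M)
    (B : Om -> A * M -> Prop) :=
  (forall al, is_subspace_prod (B al)) /\
  forall al be x y, B al x -> B be y -> B (op al be) (star x y).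

From mathcomp Require Import all_boot all_order all_algebra.
Import GRing.Theory.
Local Open Scope ring_scope.

Section Graphs.
Variables (R : comRingType) (A M : lmodType R).

Lemma is_linear0 {U V : lmodType R} {f : U -> V} : is_linear f -> f 0 = 0.
Proof.
move=> lin_f; have := lin_f 1 0 0; rewrite !scale1r addr0 => f0D.
by apply/eqP; rewrite -(can_eq (addKr (f 0))) -f0D addr0.
Qed.

Lemma graph_pair (T : M -> A) a u : graph T (a, u) <-> a = T u.
Proof. by split=> [[w [-> ->]] | ->]; last exists u. Qed.

Lemma graph_subspace (T : M -> A) : is_linear T -> is_subspace_prod (graph T).
Proof.
move=> lin_T; split; first by apply/graph_pair; rewrite (is_linear0 lin_T).
by move=> k _ _ [u ->] [v ->]; apply/graph_pair; rewrite lin_T.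
Qed.

End Graphs.

(* The twisted product of [(T al u, u)] and [(T be v, v)] has second component
   [lact (T al u) v + ract u (T be v) + H (T al u) (T be v)], so it lies on the
   graph of [T (op al be)] exactly when the O-operator identity holds; linearity
   of each [T al] makes its graph a subspace. *)
Theorem proposition3p6 (R : comRingType) (Om : Type) (op : Om -> Om -> Om)
    (hOm : associative op)
    (A M : lmodType R) (mul : A -> A -> A) (hA : is_assoc_algebra mul)
    (lact : A -> M -> M) (ract : M -> A -> M)
    (hM : is_bimodule mul lact ract)
    (H : A -> A -> M) (hH : is_hochschild_2cocycle mul lact ract H)
    (T : Om -> M -> A) (hT : forall al, is_linear (T al)) :
  is_twisted_O_operator_family op mul lact ract H T <->
  is_subalgebra_family op (twisted_semidirect_mul mul lact ract H)
    (fun al => graph (T al)).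
Proof.
split=> [[_ hO] | [_ hS]].
- split=> [al | al be _ _ [u ->] [v ->]]; first exact: graph_subspace.
  by apply/graph_pair; rewrite hO.
- split=> // al be u v; apply/graph_pair.
  by apply: (hS al be (T al u, u) (T be v, v)); apply/graph_pair.
Qed.
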